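(* Let $0<\lambda\le\Lambda$, let $\Omega \subset \mathbb R\times\mathbb R^d$ be any set, and let $u:\Omega\to\mathbb R$ be a function which at every point of $\Omega$ is twice differentiable in $x$ and differentiable in $t$. The following are equivalent: (1) There exists a function $F$ on real symmetric $d\times d$ matrices, uniformly elliptic with constants $\lambda,\Lambda$, such that $u_t(t,x) = F(D^2u(t,x))$ for all $(t,x)\in\Omega$. (2) For every pair of points $(t,x),(s,y)\in\Omega$, $$P^-\big(D^2u(t,x) - D^2u(s,y)\big) \le u_t(t,x) - u_t(s,y) \le P^+\big(D^2u(t,x)-D^2u(s,y)\big).$$
   Context: A function $F$ on real symmetric $d\times d$ matrices is uniformly elliptic with constants $0<\lambda\le\Lambda$ if for all symmetric $A,B$ with $B \ge 0$, $\lambda \operatorname{tr} B \le F(A+B) - F(A) \le \Lambda \operatorname{tr} B$. The Pucci operators are $P^+(M) = \Lambda \operatorname{tr} M_+ - \lambda \operatorname{tr} M_-$ and $P^-(M) = \lambda \operatorname{tr} M_+ - \Lambda \operatorname{tr} M_-$, where $M=M_+-M_-$ with $M_\pm$ positive semidefinite with orthogonal ranges (positive and negative parts of $M$). *)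

From HB Require Import structures.
From mathcomp Require Import all_boot all_order all_algebra.
From mathcomp Require Import boolp classical_sets reals topology normedtype derive.
Set Implicit Arguments. Unset Strict Implicit. Unset Printing Implicit Defensive.
Import Order.TTheory GRing.Theory Num.Theory.
Import numFieldNormedType.Exports.
Local Open Scope ring_scope.
Local Open Scope classical_set_scope.

Section Defs.
Variables (R : realType) (d : nat).

Definition symmetric_mx (A : 'M[R]_d) : Prop := A^T = A.

Definition psd_mx (B : 'M[R]_d) : Prop :=
  symmetric_mx B /\ forall v : 'rV[R]_d, 0 <= (v *m B *m v^T) 0 0.

Definition unif_elliptic (lam Lam : R) (F : 'M[R]_d -> R) : Prop :=
  forall A B : 'M[R]_d, symmetric_mx A -> psd_mx B ->
    lam * \tr B <= F (A + B) - F A /\ F (A + B) - F A <= Lam * \tr B.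

Definition posneg_decomp (M P N : 'M[R]_d) : Prop :=
  [/\ psd_mx P, psd_mx N, M = P - N &
      forall x y : 'cV[R]_d, (P *m x)^T *m (N *m y) = 0].

(* the (unique) positive / negative parts of M (chosen; for symmetric M they exist) *)
Definition posneg_parts (M : 'M[R]_d) : 'M[R]_d * 'M[R]_d :=
  xget (0, 0) [set pn | posneg_decomp M pn.1 pn.2].

Definition pos_part (M : 'M[R]_d) := (posneg_parts M).1.
Definition neg_part (M : 'M[R]_d) := (posneg_parts M).2.

Definition pucci_plus (lam Lam : R) (M : 'M[R]_d) : R :=
  Lam * \tr (pos_part M) - lam * \tr (neg_part M).
Definition pucci_minus (lam Lam : R) (M : 'M[R]_d) : R :=
  lam * \tr (pos_part M) - Lam * \tr (neg_part M).

(* f : R^d -> R is (pointwise, second-order Peano) twice differentiable at x,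
   with gradient p and symmetric Hessian M:
   f (x+h) = f x + p.h + 1/2 h^T M h + o(|h|^2). *)
Definition twice_diff_at (f : 'rV[R]_d -> R) (x : 'rV[R]_d)
    (p : 'rV[R]_d) (M : 'M[R]_d) : Prop :=
  symmetric_mx M /\
  forall e : R, 0 < e -> exists r : R, 0 < r /\
    forall h : 'rV[R]_d, (h *m h^T) 0 0 < r ->
      `| f (x + h) - f x - (p *m h^T) 0 0 - 2^-1 * (h *m M *m h^T) 0 0 |
        <= e * (h *m h^T) 0 0.

End Defs.

From HB Require Import structures.
From mathcomp Require Import all_boot all_order all_algebra.
From mathcomp Require Import boolp classical_sets reals topology normedtype derive.
From mathcomp Require Import complex.
From mathcomp Require Import ring lra.
Set Implicit Arguments. Unset Strict Implicit. Unset Printing Implicit Defensive.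
Import Order.TTheory GRing.Theory Num.Theory.
Import numFieldNormedType.Exports.
Local Open Scope ring_scope.
Local Open Scope classical_set_scope.

(* The statement is purely algebraic: only the symmetry of the Hessians is used.

   1. Real spectral theorem (Section RealSpectral): a symmetric matrix over a
      real closed field is orthogonally diagonalizable; real eigenvectors are
      obtained from eigenvalues over R[i], which are real.
   2. Positive/negative parts (Section PosNegParts): they exist by
      diagonalization, and the negative part has least trace among all
      decompositions M = P' - N' into psd matrices.
   3. Pucci operator (Section PucciOperator): hence P+(M) is the least value of
      Lam tr P' - lam tr N'; so P+ is elliptic, subadditive and P+(0) <= 0.
      (1) => (2) follows by comparing F at B - N + P and B - N + N; and
      (2) => (1) by the inf-convolution F M = inf_p (u_t(p) + P+(M - D^2u(p))). *)

Section RealSpectral.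
Variable R : rcfType.
Local Notation toC := (real_complex R).
Implicit Types n k r : nat.

Lemma norm2_gt0 n (v : 'rV[R]_n) : v != 0 -> 0 < (v *m v^T) 0 0.
Proof.
move=> v0; have sq_ge0 j : 0 <= v 0 j * v^T j 0 by rewrite mxE -expr2 sqr_ge0.
rewrite mxE lt_def sumr_ge0 ?andbT //; apply: contra v0.
rewrite psumr_eq0 // => /allP v0; apply/eqP/rowP => j.
by move: (v0 j (mem_index_enum _)); rewrite mxE mulf_eq0 orbb => /eqP ->; rewrite ?mxE.
Qed.

Lemma cnorm2_neq0 n (z : 'rV[complex R]_n) :
  z != 0 -> (z *m (map_mx (@conjc R) z)^T) 0 0 != 0.
Proof.
move=> z0; rewrite mxE psumr_eq0 => [|j _]; last by rewrite !mxE mulcJ_ge0.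
apply: contra z0 => /allP z0; apply/eqP/rowP => j.
move: (z0 j (mem_index_enum _)).
by rewrite !mxE mulf_eq0 conjc_eq0 orbb => /eqP ->; rewrite ?mxE.
Qed.

(* The eigenvalues over R[i] of a real symmetric matrix are real:
   comparing z M z^* with its conjugate gives (a - a^* ) |z|^2 = 0. *)
Lemma sym_eigenvalue_real n (M : 'M[R]_n) (z : 'rV[complex R]_n) (a : complex R) :
  M^T = M -> z != 0 -> z *m map_mx toC M = a *: z -> exists mu : R, a = toC mu.
Proof.
move=> sM z0 zM; pose zs := map_mx (@conjc R) z.
have zsM : zs *m map_mx toC M = a^*%C *: zs.
  have realM : map_mx (@conjc R) (map_mx toC M) = map_mx toC M.
    by apply/matrixP => i j; rewrite !mxE conjc_real.
  by rewrite /zs -realM -map_mxM zM map_mxZ.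
have sMC : (map_mx toC M)^T = map_mx toC M by rewrite map_trmx sM.
have : a *: (z *m zs^T) = a^*%C *: (z *m zs^T).
  rewrite scalemxAl -zM -mulmxA -[_ *m zs^T]trmxK trmx_mul trmxK sMC zsM.
  by rewrite linearZ /= -scalemxAr.
move=> /(congr1 (fun X : 'M_1 => X 0 0)) /eqP.
rewrite [X in X == _]mxE [X in _ == X]mxE -subr_eq0 -mulrBl mulf_eq0.
rewrite (negbTE (cnorm2_neq0 z0)) orbF subr_eq0 => /eqP.
by case: a {zM zsM} => x y [] /eqP; rewrite -subr_eq0 opprK -mulr2n mulrn_eq0 => /eqP ->; exists x.
Qed.

(* A nonzero subspace (spanned by the free rows of B) which is stable under a
   real symmetric M contains a real eigenvector of M: the restriction of M to
   it has a complex eigenvalue, which is real, hence has a real eigenvector. *)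
Lemma sym_stable_eigenvector n r (M : 'M[R]_n) (B : 'M[R]_(r, n)) :
  M^T = M -> (0 < r)%N -> row_free B -> (B *m M <= B)%MS ->
  exists2 v : 'rV[R]_n, v != 0 & (v <= B)%MS /\ exists mu, v *m M = mu *: v.
Proof.
move=> sM r0 fB sBM; pose C := B *m M *m pinvmx B.
have CB : C *m B = B *m M by rewrite mulmxKpV.
have [a /eigenvalueP [w wC w0]] := eigenvalue_closed (map_mx toC C) r0.
have [mu amu] : exists mu : R, a = toC mu.
  apply: (@sym_eigenvalue_real _ M (w *m map_mx toC B)) => //.
    by rewrite mulmx_free_eq0 // row_free_map.
  by rewrite -mulmxA -map_mxM -CB map_mxM mulmxA wC -scalemxAl.
have /det0P [x x0 xC] : \det (C - mu%:M) == 0.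
  rewrite -(fmorph_eq0 toC) -det_map_mx map_mxB map_scalar_mx.
  by apply/det0P; exists w => //; rewrite mulmxBr wC mul_mx_scalar {1}amu subrr.
exists (x *m B); first by rewrite mulmx_free_eq0.
split; first exact: submxMl.
exists mu; rewrite -mulmxA -CB mulmxA scalemxAl.
rewrite -mul_mx_scalar; congr (_ *m B); apply/eqP.
by rewrite -subr_eq0 -mulmxBr xC.
Qed.

(* Induction step of the spectral theorem: for every k <= n there are k
   orthonormal rows Q which are eigenvectors of M (Q M = diag(D) Q); the next
   one is found in the M-stable orthogonal complement of the rows of Q. *)
Lemma sym_orthonormal_eigenrows n (M : 'M[R]_n) : M^T = M -> forall k, (k <= n)%N ->
  exists (Q : 'M[R]_(k, n)) (D : 'rV[R]_k),
    Q *m Q^T = 1%:M /\ Q *m M = diag_mx D *m Q.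
Proof.
move=> sM; elim=> [|k IH] kn; first by exists 0, 0; split; apply/matrixP => -[].
have [Q [D [QQ QM]]] := IH (ltnW kn).
have rQ : \rank Q = k.
  by apply/eqP; rewrite eqn_leq rank_leq_row -{1}(mxrank1 R k) -QQ mxrankM_maxl.
pose W := kermx Q^T; pose B := row_base W.
have rW : \rank W = (n - k)%N by rewrite mxrank_ker mxrank_tr rQ.
have sBM : (B *m M <= B)%MS.
  rewrite (eqmxMr M (eq_row_base W)) (eq_row_base W); apply/sub_kermxP; rewrite -mulmxA.
  have -> : M *m Q^T = Q^T *m diag_mx D.
    by rewrite -{1}sM -trmx_mul QM trmx_mul tr_diag_mx.
  by rewrite mulmxA (sub_kermxP (submx_refl W)) mul0mx.
have rW0 : (0 < \rank W)%N by rewrite rW subn_gt0.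
have [v v0 [vB [mu vM]]] := sym_stable_eigenvector sM rW0 (row_base_free W) sBM.
have vQ : v *m Q^T = 0 by apply/sub_kermxP; rewrite -(eq_row_base W).
pose c := (v *m v^T) 0 0; have c0 : 0 < c := norm2_gt0 v0.
pose q := (Num.sqrt c)^-1 *: v.
have qq : q *m q^T = 1%:M.
  apply/matrixP => i j; rewrite !ord1 /q linearZ /= -scalemxAl -scalemxAr scalerA.
  rewrite [in LHS]mxE -/c [in RHS]mxE /= -expr2 exprVn sqr_sqrtr ?ltW //.
  by rewrite mulVf ?gt_eqF.
have qQ : q *m Q^T = 0 by rewrite /q -scalemxAl vQ scaler0.
have Qq : Q *m q^T = 0 by rewrite -(trmxK Q) -trmx_mul qQ trmx0.
exists (col_mx q Q), (row_mx (mu%:M : 'rV_1) D); split.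
  suff e : col_mx q Q *m (col_mx q Q)^T = 1%:M :> 'M_(1 + k) by exact: e.
  by rewrite tr_col_mx mul_col_row qq QQ qQ Qq -scalar_mx_block.
suff e : col_mx q Q *m M = diag_mx (row_mx (mu%:M : 'rV_1) D) *m col_mx q Q
  by exact: e.
rewrite mul_col_mx QM diag_mx_row mul_block_col !mul0mx addr0 add0r.
congr col_mx; rewrite /q -scalemxAl vM scalerA mulrC -scalerA.
by apply/rowP => j; rewrite !mxE big_ord1 !mxE eqxx.
Qed.

Theorem sym_diagonalization n (M : 'M[R]_n) : M^T = M ->
  exists (Q : 'M[R]_n) (D : 'rV[R]_n),
    [/\ Q *m Q^T = 1%:M, Q^T *m Q = 1%:M & M = Q^T *m diag_mx D *m Q].
Proof.
move=> sM; have [Q [D [QQ QM]]] := sym_orthonormal_eigenrows sM (leqnn n).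
have QtQ := mulmx1C QQ; exists Q, D; split => //.
by rewrite -mulmxA -QM mulmxA QtQ mul1mx.
Qed.
End RealSpectral.

Section PosNegParts.
Variables (R : realType) (n : nat).
Implicit Types (M P N X Y : 'M[R]_n).

Lemma quad_diag (w E : 'rV[R]_n) :
  (w *m diag_mx E *m w^T) 0 0 = \sum_i E 0 i * w 0 i ^+ 2.
Proof. by rewrite mxE; apply: eq_bigr => i _; rewrite mul_mx_diag !mxE; ring. Qed.

Lemma psd_congr_diag m X (A : 'M[R]_(m, n)) i : psd_mx X -> 0 <= (A *m X *m A^T) i i.
Proof.
case=> _ X_ge0; suff -> : (A *m X *m A^T) i i = (row i A *m X *m (row i A)^T) 0 0.
  exact: X_ge0.
by rewrite tr_row -row_mul !mxE; apply: eq_bigr => j _; rewrite !mxE.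
Qed.

Lemma psd0 : psd_mx (0 : 'M[R]_n).
Proof. by split; [rewrite /symmetric_mx trmx0 | move=> v; rewrite mulmx0 mul0mx mxE]. Qed.

Lemma psdD X Y : psd_mx X -> psd_mx Y -> psd_mx (X + Y).
Proof.
move=> [sX pX] [sY pY]; split; first by rewrite /symmetric_mx linearD /= sX sY.
by move=> v; rewrite mulmxDr mulmxDl mxE addr_ge0.
Qed.

Lemma symB X Y : symmetric_mx X -> symmetric_mx Y -> symmetric_mx (X - Y).
Proof. by rewrite /symmetric_mx linearB /= => -> ->. Qed.

Lemma psd_diag_congr (Q : 'M[R]_n) (E : 'rV[R]_n) :
  (forall i, 0 <= E 0 i) -> psd_mx (Q^T *m diag_mx E *m Q).
Proof.
move=> E_ge0; split; first by rewrite /symmetric_mx !trmx_mul trmxK tr_diag_mx mulmxA.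
move=> v; rewrite !mulmxA -(mulmxA _ Q) -[Q *m v^T]trmxK trmx_mul trmxK quad_diag.
by apply: sumr_ge0 => i _; rewrite mulr_ge0 ?sqr_ge0.
Qed.

Lemma real_posneg_split (x : R) :
  (if 0 <= x then x else 0) - (if 0 <= x then 0 else - x) = x /\
  (if 0 <= x then x else 0) * (if 0 <= x then 0 else - x) = 0.
Proof. by case: ifP => _; split; rewrite ?subr0 ?mulr0 ?sub0r ?opprK ?mul0r. Qed.

(* Positive and negative parts exist for symmetric matrices: split the
   eigenvalues by sign in an orthonormal eigenbasis. *)
Lemma posneg_decomp_exists M : symmetric_mx M -> exists P N, posneg_decomp M P N.
Proof.
move=> sM; have [Q [D [QQ _ eM]]] := sym_diagonalization sM.
pose Dp := \row_i (if 0 <= D 0 i then D 0 i else 0).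
pose Dn := \row_i (if 0 <= D 0 i then 0 else - D 0 i).
have pP : psd_mx (Q^T *m diag_mx Dp *m Q).
  by apply: psd_diag_congr => i; rewrite mxE; case: ifP.
have pN : psd_mx (Q^T *m diag_mx Dn *m Q).
  apply: psd_diag_congr => i; rewrite mxE; case: ifP => // /negbT.
  by rewrite -ltNge oppr_ge0 => /ltW.
exists (Q^T *m diag_mx Dp *m Q), (Q^T *m diag_mx Dn *m Q); split => //.
  rewrite eM -mulmxBl -mulmxBr; congr (_ *m _ *m _); apply/matrixP => i j.
  by rewrite !mxE -mulrnBl (real_posneg_split (D 0 i)).1.
move=> x y; move: pP pN.
set P := Q^T *m diag_mx Dp *m Q; set N := Q^T *m diag_mx Dn *m Q => pP _.
rewrite trmx_mul pP.1 -mulmxA (mulmxA P).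
have -> : P *m N = 0.
  rewrite /P /N !mulmxA -(mulmxA _ Q Q^T) QQ mulmx1 -(mulmxA _ (diag_mx Dp)) mulmx_diag.
  have -> : \row_j (Dp 0 j * Dn 0 j) = 0.
    by apply/rowP => j; rewrite !mxE (real_posneg_split (D 0 j)).2.
  by rewrite linear0 mulmx0 mul0mx.
by rewrite mul0mx mulmx0.
Qed.

Lemma posneg_parts_decomp M : symmetric_mx M ->
  posneg_decomp M (pos_part M) (neg_part M).
Proof.
move=> /posneg_decomp_exists [P [N H]]; rewrite /pos_part /neg_part /posneg_parts.
exact: (xgetPex (0, 0) (ex_intro (fun pn => posneg_decomp M pn.1 pn.2) (P, N) H)).
Qed.

Lemma posneg_decomp_mul0 M P N : posneg_decomp M P N -> N *m P = 0.
Proof.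
case=> _ pN _ orth; apply: trmx_inj; rewrite trmx_mul pN.1 trmx0.
apply/matrixP => i j; have := orth (delta_mx i 0) (delta_mx j 0).
rewrite trmx_mul -mulmxA (mulmxA _ N) => /(congr1 (fun X : 'M_1 => X 0 0)).
by rewrite trmx_delta mulmxA -rowE -colE !mxE => ->.
Qed.

(* In an eigenbasis of N, the diagonal entries
   of P vanish wherever N has a nonzero eigenvalue, since N P = 0. *)
Lemma neg_part_tr_min M P N P' N' : posneg_decomp M P N -> psd_mx P' -> psd_mx N' ->
  M = P' - N' -> \tr N <= \tr N'.
Proof.
move=> dec pP' pN' eM'; have NP := posneg_decomp_mul0 dec.
case: dec => pP pN eM _; have [Q [D [QQ QtQ eN]]] := sym_diagonalization pN.1.
pose cj X := Q *m X *m Q^T.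
have trcj X : \tr (cj X) = \tr X by rewrite /cj mxtrace_mulC mulmxA QtQ mul1mx.
have cjN : cj N = diag_mx D by rewrite /cj eN !mulmxA QQ mul1mx -mulmxA QQ mulmx1.
have DQP : diag_mx D *m (Q *m P) = 0.
  by rewrite -cjN /cj mulmxA -(mulmxA _ Q^T) QtQ mulmx1 -mulmxA NP mulmx0.
rewrite -(trcj N) -(trcj N'); apply: ler_sum => i _.
have eNi : cj N i i = cj P i i - (cj P' i i - cj N' i i).
  have -> : N = P - (P' - N') by rewrite -eM' eM opprB addrC subrK.
  by rewrite /cj !mulmxBr !mulmxBl !mxE.
have hP' : 0 <= cj P' i i := psd_congr_diag Q i pP'.
have hN' : 0 <= cj N' i i := psd_congr_diag Q i pN'.
have cNi : cj N i i = D 0 i by rewrite cjN mxE eqxx mulr1n.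
have [Di0|Di0] := eqVneq (D 0 i) 0; first by rewrite cNi Di0.
suff cPi : cj P i i = 0 by rewrite eNi cPi; lra.
rewrite /cj mxE big1 // => j _.
have := congr1 (fun X : 'M_n => X i j) DQP; rewrite /= mul_diag_mx !mxE.
by move/eqP; rewrite mulf_eq0 (negbTE Di0) /= => /eqP ->; rewrite mul0r.
Qed.
End PosNegParts.

Section PucciOperator.
Variables (R : realType) (n : nat) (lam Lam : R).
Hypothesis lam_le_Lam : lam <= Lam.
Implicit Types (M P N X Y A B : 'M[R]_n).
Local Notation Pp := (pucci_plus lam Lam).
Local Notation Pm := (pucci_minus lam Lam).

(* Variational characterization: P+(M) is the least value of
   Lam tr P' - lam tr N' over decompositions M = P' - N' into psd matrices
   (the neg. part has least trace, and tr P - tr N = tr M is fixed). *)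
Lemma pucci_plus_le M P' N' : symmetric_mx M -> psd_mx P' -> psd_mx N' ->
  M = P' - N' -> Pp M <= Lam * \tr P' - lam * \tr N'.
Proof.
move=> sM pP' pN' eM'; have dec := posneg_parts_decomp sM.
have trN := neg_part_tr_min dec pP' pN' eM'.
have trM : \tr (pos_part M) - \tr (neg_part M) = \tr P' - \tr N'.
  by case: dec => _ _ eM _; rewrite -!linearB /= -eM -eM'.
have := mulr_ge0 (eqbRL (subr_ge0 _ _) lam_le_Lam) (eqbRL (subr_ge0 _ _) trN).
rewrite /pucci_plus; nra.
Qed.

Lemma pucci_plus_elliptic : unif_elliptic lam Lam (Pp : 'M[R]_n -> R).
Proof.
move=> X B sX pB; have sXB : symmetric_mx (X + B).
  by rewrite /symmetric_mx linearD /= sX pB.1.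
have [pP pN eX _] := posneg_parts_decomp sX.
have [pP1 pN1 eXB _] := posneg_parts_decomp sXB.
split.
  have eX' : X = pos_part (X + B) - (neg_part (X + B) + B).
    by rewrite opprD addrA -eXB addrK.
  have := pucci_plus_le sX pP1 (psdD pN1 pB) eX'.
  rewrite mxtraceD /pucci_plus; lra.
have eXB' : X + B = pos_part X + B - neg_part X by rewrite {1}eX addrAC.
have := pucci_plus_le sXB (psdD pP pB) pN eXB'.
rewrite mxtraceD /pucci_plus; lra.
Qed.

(* P+ is subadditive: add the decompositions of X and Y. *)
Lemma pucci_plus_subadd X Y : symmetric_mx X -> symmetric_mx Y -> Pp (X + Y) <= Pp X + Pp Y.
Proof.
move=> sX sY; have sXY : symmetric_mx (X + Y) by rewrite /symmetric_mx linearD /= sX sY.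
have [pP pN eX _] := posneg_parts_decomp sX.
have [pP' pN' eY _] := posneg_parts_decomp sY.
have eXY : X + Y = pos_part X + pos_part Y - (neg_part X + neg_part Y).
  by rewrite {1}eX {1}eY addrACA opprD.
have := pucci_plus_le sXY (psdD pP pP') (psdD pN pN') eXY.
rewrite !mxtraceD /pucci_plus; lra.
Qed.

(* In fact P+(0) = 0; the upper bound is what the interpolation needs. *)
Lemma pucci_plus0 : Pp (0 : 'M[R]_n) <= 0.
Proof.
have := pucci_plus_le (psd0 R n).1 (psd0 R n) (psd0 R n) (esym (subr0 0)).
by rewrite linear0 !mulr0 subr0.
Qed.

(* Direction (1) => (2): an elliptic F satisfies the Pucci bounds, by
   writing A = C + P and B = C + N with C := B - N, P, N the parts of A - B. *)
Lemma elliptic_pucci_bounds (F : 'M[R]_n -> R) A B : unif_elliptic lam Lam F ->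
  symmetric_mx A -> symmetric_mx B -> Pm (A - B) <= F A - F B /\ F A - F B <= Pp (A - B).
Proof.
move=> ellF sA sB; have [pP pN eAB _] := posneg_parts_decomp (symB sA sB).
set P := pos_part (A - B) in pP eAB *; set N := neg_part (A - B) in pN eAB *.
set C := B - N; have sC : symmetric_mx C := symB sB pN.1.
have -> : F A = F (C + P) by rewrite /C addrAC -addrA -eAB addrC subrK.
have -> : F B = F (C + N) by rewrite subrK.
have [h1 h2] := ellF _ _ sC pP; have [h3 h4] := ellF _ _ sC pN.
rewrite /pucci_minus /pucci_plus -/P -/N; split; lra.
Qed.

(* Direction (2) => (1): data c p, C p (p in Om) obeying the upper Pucci bound
   are interpolated by the elliptic inf-convolution
     F M := inf_{p in Om} (c p + P+(M - C p)),
   which is bounded below by subadditivity of P+, elliptic since each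
   M |-> c p + P+(M - C p) is, and equal to c at C p by the bound and P+(0) <= 0.
   For empty Om, P+ itself will do. *)
Lemma elliptic_interpolation (T : Type) (Om : set T) (c : T -> R) (C : T -> 'M[R]_n) :
  (forall p, Om p -> symmetric_mx (C p)) ->
  (forall p q, Om p -> Om q -> c p - c q <= Pp (C p - C q)) ->
  exists F : 'M[R]_n -> R, unif_elliptic lam Lam F /\ forall p, Om p -> c p = F (C p).
Proof.
move=> sC c_bound; have [[p0 Om_p0]|Om0] := pselect (exists p, Om p); last first.
  by exists Pp; split=> [|p Om_p]; [exact: pucci_plus_elliptic | case: Om0; exists p].
pose G M p := c p + Pp (M - C p); pose E M := [set G M p | p in Om].
exists (fun M => inf (E M)).
have E_lb M : symmetric_mx M -> has_lbound (E M).
  move=> sM; exists (c p0 - Pp (C p0 - M)) => _ [p Om_p <-].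
  have := c_bound p0 p Om_p0 Om_p.
  have := pucci_plus_subadd (symB (sC p0 Om_p0) sM) (symB sM (sC p Om_p)).
  rewrite addrA subrK /G; lra.
have E_n0 M : E M !=set0 by exists (G M p0), p0.
have inf_le M p : symmetric_mx M -> Om p -> inf (E M) <= G M p.
  by move=> sM Om_p; apply: (ge_inf (E_lb M sM)); exists p.
split.
  move=> A B sA pB; have sAB : symmetric_mx (A + B).
    by rewrite /symmetric_mx linearD /= sA pB.1.
  have G_incr p : Om p -> lam * \tr B <= G (A + B) p - G A p <= Lam * \tr B.
    move=> Om_p; have [h1 h2] := pucci_plus_elliptic (symB sA (sC p Om_p)) pB.
    by rewrite /G (addrAC A B); apply/andP; split; lra.
  split.
    suff : inf (E A) + lam * \tr B <= inf (E (A + B)) by lra.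
    apply: lb_le_inf (E_n0 _) _ => _ [p Om_p <-].
    by have := inf_le A p sA Om_p; case/andP: (G_incr p Om_p); lra.
  suff : inf (E (A + B)) - Lam * \tr B <= inf (E A) by lra.
  apply: lb_le_inf (E_n0 _) _ => _ [p Om_p <-].
  by have := inf_le (A + B) p sAB Om_p; case/andP: (G_incr p Om_p); lra.
move=> p Om_p; apply/eqP; rewrite eq_le; apply/andP; split.
  by apply: lb_le_inf (E_n0 _) _ => _ [q Om_q <-]; have := c_bound p q Om_p Om_q; rewrite /G; lra.
by have := inf_le (C p) p (sC p Om_p) Om_p; rewrite /G subrr; have := pucci_plus0; lra.
Qed.
End PucciOperator.

Theorem lemma5p1 (R : realType) (d : nat) (lam Lam : R)
  (Omega : set (R * 'rV[R]_d)) (u : R -> 'rV[R]_d -> R)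
  (ut : R -> 'rV[R]_d -> R) (D2u : R -> 'rV[R]_d -> 'M[R]_d) :
  0 < lam -> lam <= Lam ->
  (forall t x, Omega (t, x) -> is_derive t 1 (fun s => u s x) (ut t x)) ->
  (forall t x, Omega (t, x) ->
     exists p : 'rV[R]_d, twice_diff_at (u t) x p (D2u t x)) ->
  (exists F : 'M[R]_d -> R, unif_elliptic lam Lam F /\
     forall t x, Omega (t, x) -> ut t x = F (D2u t x))
  <->
  (forall t x s y, Omega (t, x) -> Omega (s, y) ->
     pucci_minus lam Lam (D2u t x - D2u s y) <= ut t x - ut s y /\
     ut t x - ut s y <= pucci_plus lam Lam (D2u t x - D2u s y)).
Proof.
move=> _ lam_le_Lam _ D2u_hess.
have D2u_sym t x : Omega (t, x) -> symmetric_mx (D2u t x).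
  by move=> /D2u_hess [p []].
split=> [[F [ellF ut_F]] t x s y Om_tx Om_sy|pucci_bounds].
  rewrite (ut_F t x Om_tx) (ut_F s y Om_sy).
  exact: elliptic_pucci_bounds ellF (D2u_sym t x Om_tx) (D2u_sym s y Om_sy).
have [F [ellF ut_F]] := elliptic_interpolation lam_le_Lam
  (c := fun p => ut p.1 p.2) (C := fun p => D2u p.1 p.2)
  (fun '(t, x) Om_tx => D2u_sym t x Om_tx)
  (fun '(t, x) '(s, y) Om_tx Om_sy => (pucci_bounds t x s y Om_tx Om_sy).2).
by exists F; split => // t x Om_tx; exact: ut_F (t, x) Om_tx.
Qed.
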